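(* We have $\mathsf{E}^{-1}=\mathsf{E}$, $\mathsf{E}\mathsf{A}\mathsf{E}=\mathsf{B}$, $\mathsf{E}\mathsf{B}\mathsf{E}=\mathsf{A}$, $\mathsf{E}\mathsf{C}\mathsf{E}=\mathsf{C}$. For every $d\in\mathbb{N}$ and $m_1,\dots,m_{2d}\in\mathbb{Z}$, with $t=\operatorname{tr}(W)$, $s=\operatorname{tr}^*(W)$, $W=W_1(m_1,\dots,m_{2d})$, the characteristic polynomial of $\mathsf{C}\mathsf{W}(m_1,\dots,m_{2d})\mathsf{E}$ is $$\det(xI_5-\mathsf{C}\mathsf{W}\mathsf{E})=(x-1)\big(1-4sx-(s^2+4ts+2)x^2-4sx^3+x^4\big),$$ and hence its eigenvalues are $1$ and $$s+\tfrac12\sqrt{5s^2+4ts+4}\pm\tfrac12\sqrt{9s^2+4ts+4s\sqrt{5s^2+4ts+4}},\qquad s-\tfrac12\sqrt{5s^2+4ts+4}\pm\tfrac12\sqrt{9s^2+4ts-4s\sqrt{5s^2+4ts+4}}.$$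
   Context: $A_1=\begin{pmatrix}1&1\\0&1\end{pmatrix}$, $B_1=\begin{pmatrix}1&0\\1&1\end{pmatrix}$, $W_1(m_1,\dots,m_{2d})=\prod_{i=1}^dA_1^{m_{2i-1}}B_1^{m_{2i}}$. Let $\mathsf{A}=\begin{pmatrix}1&1&0&0&2\\0&1&0&0&0\\0&0&1&1&0\\0&0&0&1&0\\0&0&0&0&1\end{pmatrix}$, $\mathsf{B}=\begin{pmatrix}1&0&0&0&0\\1&1&0&0&0\\0&0&1&0&0\\0&0&1&1&2\\0&0&0&0&1\end{pmatrix}$, $\mathsf{C}=\begin{pmatrix}1&0&0&0&0\\0&1&0&0&0\\0&0&1&0&0\\0&0&0&1&0\\2&0&0&2&1\end{pmatrix}$, $\mathsf{E}=\begin{pmatrix}0&0&0&1&0\\0&0&1&0&0\\0&1&0&0&0\\1&0&0&0&0\\0&0&0&0&1\end{pmatrix}$, and $\mathsf{W}(m_1,\dots,m_{2d})=\prod_{i=1}^d\mathsf{A}^{m_{2i-1}}\mathsf{B}^{m_{2i}}$. $\operatorname{tr}^*(M)=M_{1,2}+M_{2,1}$ is the anti-trace of a $2\times2$ matrix. *)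

From HB Require Import structures.
From mathcomp Require Import all_boot all_order all_algebra all_field.
Set Implicit Arguments. Unset Strict Implicit. Unset Printing Implicit Defensive.
Import Order.TTheory GRing.Theory Num.Theory.
Local Open Scope ring_scope.

Definition mx_of_rows (m n : nat) (rows : seq (seq int)) : 'M[int]_(m, n) :=
  \matrix_(i < m, j < n) nth 0 (nth [::] rows i) j.

Definition A1 : 'M[int]_2 := mx_of_rows 2 2 [:: [:: 1; 1]; [:: 0; 1]].
Definition B1 : 'M[int]_2 := mx_of_rows 2 2 [:: [:: 1; 0]; [:: 1; 1]].

(* W_1(m_1,...,m_{2d}) = prod_{i=1}^d A1^{m_{2i-1}} B1^{m_{2i}};
   here m is 0-indexed: m_{2i-1} = m (2i-2), m_{2i} = m (2i-1). *)
Definition W1 (d : nat) (m : nat -> int) : 'M[int]_2 :=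
  \prod_(i < d) (A1 ^ m (2 * i)%N * B1 ^ m (2 * i).+1).

Definition sA : 'M[int]_5 := mx_of_rows 5 5
  [:: [:: 1; 1; 0; 0; 2]; [:: 0; 1; 0; 0; 0]; [:: 0; 0; 1; 1; 0];
      [:: 0; 0; 0; 1; 0]; [:: 0; 0; 0; 0; 1]].
Definition sB : 'M[int]_5 := mx_of_rows 5 5
  [:: [:: 1; 0; 0; 0; 0]; [:: 1; 1; 0; 0; 0]; [:: 0; 0; 1; 0; 0];
      [:: 0; 0; 1; 1; 2]; [:: 0; 0; 0; 0; 1]].
Definition sC : 'M[int]_5 := mx_of_rows 5 5
  [:: [:: 1; 0; 0; 0; 0]; [:: 0; 1; 0; 0; 0]; [:: 0; 0; 1; 0; 0];
      [:: 0; 0; 0; 1; 0]; [:: 2; 0; 0; 2; 1]].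
Definition sE : 'M[int]_5 := mx_of_rows 5 5
  [:: [:: 0; 0; 0; 1; 0]; [:: 0; 0; 1; 0; 0]; [:: 0; 1; 0; 0; 0];
      [:: 1; 0; 0; 0; 0]; [:: 0; 0; 0; 0; 1]].

Definition sW (d : nat) (m : nat -> int) : 'M[int]_5 :=
  \prod_(i < d) (sA ^ m (2 * i)%N * sB ^ m (2 * i).+1).

Definition antitr (M : 'M[int]_2) : int := M 0 1 + M 1 0.

From HB Require Import structures.
From mathcomp Require Import all_boot all_order all_algebra all_field.
From mathcomp Require Import ring.
Set Implicit Arguments. Unset Strict Implicit. Unset Printing Implicit Defensive.
Import Order.TTheory GRing.Theory Num.Theory.
Local Open Scope ring_scope.

(* The 5x5 matrices are images of 2x2 ones: W |-> embed W is multiplicative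
   with sA = embed A1 and sB = embed B1, hence sW = embed W1, and
   sC * sW * sE is an explicit matrix in the four entries of W1.  Expanding its
   characteristic polynomial symbolically, it collapses to the stated quintic
   using only det W1 = 1.  The quartic factor is palindromic and splits as
   (X^2 - (2s + D) X + 1) (X^2 - (2s - D) X + 1) with D^2 = 5 s^2 + 4 t s + 4;
   each quadratic then contributes two of the roots. *)

Section MonoidMorphismExprz.

Variables (R S : unitRingType) (f : R -> S).
Hypothesis f_mmorph : monoid_morphism f.

Lemma mmorphXn (x : R) n : f (x ^+ n) = f x ^+ n.
Proof. by elim: n => [|n IH]; rewrite ?expr0 ?f_mmorph.1 // !exprS f_mmorph.2 IH. Qed.

Lemma mmorphV (x : R) : x \is a GRing.unit -> f x^-1 = (f x)^-1.
Proof.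
move=> ux.
have fxV : f x * f x^-1 = 1 by rewrite -f_mmorph.2 mulrV // f_mmorph.1.
have fVx : f x^-1 * f x = 1 by rewrite -f_mmorph.2 mulVr // f_mmorph.1.
have ufx : f x \is a GRing.unit by apply/unitrP; exists (f x^-1).
by rewrite -[LHS](mulKr ufx) fxV mulr1.
Qed.

Lemma mmorphXz (x : R) (k : int) : x \is a GRing.unit -> f (x ^ k) = f x ^ k.
Proof.
move=> ux; case: k => n; first exact: mmorphXn.
change (f (x ^+ n.+1)^-1 = (f x ^+ n.+1)^-1).
by rewrite mmorphV ?unitrX // mmorphXn.
Qed.

End MonoidMorphismExprz.

(* Laplace expansion along the first row, on matrices given by a function on
   nat indices; unlike \det it reduces under cbv, so determinants of explicit
   symbolic matrices can be expanded and then normalized by ring. *)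
Fixpoint sum_upto (V : nmodType) (g : nat -> V) (n : nat) : V :=
  if n is n'.+1 then sum_upto g n' + g n' else 0.

Definition minor_fun (T : Type) (f : nat -> nat -> T) (j : nat) : nat -> nat -> T :=
  fun i k => f i.+1 (if Nat.leb j k then k.+1 else k).

Fixpoint laplace_det (R : pzRingType) (n : nat) (f : nat -> nat -> R) : R :=
  if n is n'.+1 then
    sum_upto (fun j => (-1) ^+ j * f 0%N j * laplace_det n' (minor_fun f j)) n
  else 1.

Lemma sum_uptoE (V : nmodType) (g : nat -> V) n : sum_upto g n = \sum_(j < n) g j.
Proof. by elim: n => [|n IH]; rewrite ?big_ord0 // big_ord_recr /= IH. Qed.

Lemma lebE m n : Nat.leb m n = (m <= n)%N.
Proof. by elim: m n => [|m IH] [|n] //=; rewrite IH. Qed.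

Lemma laplace_detS (R : pzRingType) n (f : nat -> nat -> R) :
  laplace_det n.+1 f =
  \sum_(j < n.+1) (-1) ^+ j * f 0%N j * laplace_det n (minor_fun f j).
Proof. exact: sum_uptoE. Qed.

Lemma det_mx_laplace (R : comNzRingType) n (f : nat -> nat -> R) :
  \det (\matrix_(i < n, j < n) f i j) = laplace_det n f.
Proof.
elim: n f => [|n IH] f; first exact: det_mx00.
rewrite (expand_det_row _ ord0) laplace_detS; apply: eq_bigr => j _.
rewrite mxE /cofactor add0n -IH mulrCA mulrA; congr (_ * \det _).
apply/matrixP => i k; rewrite !mxE /minor_fun /= lebE /bump leq0n add1n.
by case: leqP.
Qed.

Lemma char_poly_laplace (R : comNzRingType) n (f : nat -> nat -> R) :
  char_poly (\matrix_(i < n, j < n) f i j) =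
  laplace_det n (fun i j => 'X *+ eqn i j - (f i j)%:P).
Proof.
rewrite /char_poly -det_mx_laplace; congr (\det _).
by apply/matrixP => i j; rewrite !mxE.
Qed.

Ltac mx_entrywise :=
  let i := fresh "i" in let j := fresh "j" in
  apply/matrixP => i j; do 3 rewrite ?mxE ?big_ord_recr ?big_ord0 /=;
  case: i => [[|[|[|[|[|i]]]]] ?] //; case: j => [[|[|[|[|[|j]]]]] ?] //=.

Lemma mx2_rows (X : 'M[int]_2) :
  X = mx_of_rows 2 2 [:: [:: X 0 0; X 0 1]; [:: X 1 0; X 1 1]].
Proof. by mx_entrywise; congr (X _ _); apply/val_inj. Qed.

Lemma det_mx2 (a b c e : int) :
  \det (mx_of_rows 2 2 [:: [:: a; b]; [:: c; e]]) = a * e - b * c.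
Proof.
rewrite /mx_of_rows (@det_mx_laplace _ 2 (fun i j => nth 0 (nth [::] _ i) j)) /=.
ring.
Qed.

Lemma mxtrace_mx2 (R : nzRingType) (X : 'M[R]_2) : \tr X = X 0 0 + X 1 1.
Proof.
by rewrite /mxtrace big_ord_recl big_ord1; congr (X _ _ + X _ _); apply/val_inj.
Qed.

Lemma det_monoid_morphism (R : comNzRingType) n : monoid_morphism (@determinant R n.+1).
Proof. by split; [exact: det1 | exact: det_mulmx]. Qed.

Lemma det_A1 : \det A1 = 1. Proof. by rewrite det_mx2. Qed.
Lemma det_B1 : \det B1 = 1. Proof. by rewrite det_mx2. Qed.

Lemma unit_A1 : A1 \is a GRing.unit.
Proof. by rewrite -[_ \is a _]/(A1 \in unitmx) unitmxE det_A1 unitr1. Qed.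
Lemma unit_B1 : B1 \is a GRing.unit.
Proof. by rewrite -[_ \is a _]/(B1 \in unitmx) unitmxE det_B1 unitr1. Qed.

Lemma det_W1 d m : \det (W1 d m) = 1.
Proof.
have det_mm := @det_monoid_morphism int 1.
rewrite /W1 (big_morph _ det_mm.2 det_mm.1); apply: big1 => i _.
rewrite det_mm.2 (mmorphXz det_mm _ unit_A1) (mmorphXz det_mm _ unit_B1).
by rewrite det_A1 det_B1 !exp1rz mulr1.
Qed.

Definition embed (W : 'M[int]_2) : 'M[int]_5 := mx_of_rows 5 5
  [:: [:: W 0 0; W 0 1; 0; 0; 2 * W 0 1]; [:: W 1 0; W 1 1; 0; 0; 2 * (W 1 1 - 1)];
      [:: 0; 0; W 0 0; W 0 1; 2 * (W 0 0 - 1)]; [:: 0; 0; W 1 0; W 1 1; 2 * W 1 0];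
      [:: 0; 0; 0; 0; 1]].

Lemma embed_monoid_morphism : monoid_morphism embed.
Proof.
split; first by mx_entrywise.
move=> X Y; rewrite (mx2_rows X) (mx2_rows Y).
by mx_entrywise; ring.
Qed.

Lemma sA_embed : sA = embed A1. Proof. by mx_entrywise. Qed.
Lemma sB_embed : sB = embed B1. Proof. by mx_entrywise. Qed.

Lemma sW_embed d m : sW d m = embed (W1 d m).
Proof.
rewrite /sW /W1 (big_morph _ embed_monoid_morphism.2 embed_monoid_morphism.1).
apply: eq_bigr => i _; rewrite embed_monoid_morphism.2.
rewrite (mmorphXz embed_monoid_morphism _ unit_A1).
by rewrite (mmorphXz embed_monoid_morphism _ unit_B1) -sA_embed -sB_embed.
Qed.

Definition twisted_mx (a b c e : int) : 'M[int]_5 := mx_of_rows 5 5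
  [:: [:: 0; 0; b; a; 2 * b]; [:: 0; 0; e; c; 2 * e - 2]; [:: b; a; 0; 0; 2 * a - 2];
      [:: e; c; 0; 0; 2 * c]; [:: 2 * e; 2 * c; 2 * b; 2 * a; 4 * b + 4 * c + 1]].

Lemma twist_embed (a b c e : int) :
  sC * embed (mx_of_rows 2 2 [:: [:: a; b]; [:: c; e]]) * sE = twisted_mx a b c e.
Proof. by mx_entrywise; ring. Qed.

Definition quartic (R : nzRingType) (s t : R) : {poly R} :=
  1 - (4 * s) *: 'X - (s ^+ 2 + 4 * t * s + 2) *: 'X ^+ 2 - (4 * s) *: 'X ^+ 3 + 'X ^+ 4.

Lemma map_quartic (R S : comNzRingType) (f : {rmorphism R -> S}) (s t : R) :
  map_poly f (quartic s t) = quartic (f s) (f t).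
Proof.
rewrite /quartic -!mul_polyC.
ring: (map_polyC f s) (map_polyC f t) (map_polyX f).
Qed.

Lemma char_poly_twisted (a b c e : int) : a * e - b * c = 1 ->
  char_poly (twisted_mx a b c e) = ('X - 1) * quartic (b + c) (a + e).
Proof.
move=> det1.
have det1P : a%:P * e%:P = 1 + b%:P * c%:P :> {poly int}.
  by rewrite -!polyCM -polyCD -det1 subrK.
rewrite /twisted_mx /mx_of_rows.
rewrite (@char_poly_laplace _ 5 (fun i j => nth 0 (nth [::] _ i) j)).
cbv beta iota zeta delta [laplace_det sum_upto minor_fun Nat.leb eqn nat_of_bool nth].
rewrite /quartic -!mul_polyC.
ring: det1P.
Qed.

Lemma char_poly_sC_embed_sE (W : 'M[int]_2) : \det W = 1 ->
  char_poly (sC * embed W * sE) = ('X - 1) * quartic (antitr W) (\tr W).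
Proof.
rewrite mxtrace_mx2 /antitr {1 2}(mx2_rows W) det_mx2 twist_embed => detW.
by rewrite char_poly_twisted.
Qed.

Lemma mul_XsubC_pm (R : comNzRingType) (p q : R) :
  ('X - (p + q)%:P) * ('X - (p - q)%:P) = 'X ^+ 2 - (2 * p)%:P * 'X + (p ^+ 2 - q ^+ 2)%:P.
Proof. ring. Qed.

Lemma quartic_factor (R : numFieldType) (s t D E1 E2 : R) :
  D ^+ 2 = 5 * s ^+ 2 + 4 * t * s + 4 ->
  E1 ^+ 2 = 9 * s ^+ 2 + 4 * t * s + 4 * s * D ->
  E2 ^+ 2 = 9 * s ^+ 2 + 4 * t * s - 4 * s * D ->
  quartic s t = \prod_(r <- [:: s + D / 2 + E1 / 2; s + D / 2 - E1 / 2;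
                                s - D / 2 + E2 / 2; s - D / 2 - E2 / 2]) ('X - r%:P).
Proof.
move=> hD hE1 hE2.
have two_neq0 : (2 : R) != 0 by rewrite pnatr_eq0.
have norm1 : (s + D / 2) ^+ 2 - (E1 / 2) ^+ 2 = 1 by field: hD hE1.
have norm2 : (s - D / 2) ^+ 2 - (E2 / 2) ^+ 2 = 1 by field: hD hE2.
have trace1 : 2 * (s + D / 2) = 2 * s + D by field.
have trace2 : 2 * (s - D / 2) = 2 * s - D by field.
have hDp : D%:P ^+ 2 = (5 * s ^+ 2 + 4 * t * s + 4)%:P :> {poly R}.
  by rewrite -rmorphXn hD.
rewrite !big_cons big_nil mulr1 mulrA !mul_XsubC_pm norm1 norm2 trace1 trace2.
rewrite /quartic -!mul_polyC.
ring: hDp.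
Qed.

Lemma sE_involutive : sE * sE = 1. Proof. by mx_entrywise. Qed.

Lemma sE_symmetries : [/\ sE \in unitmx, invmx sE = sE,
  sE * sA * sE = sB, sE * sB * sE = sA & sE * sC * sE = sC].
Proof.
have [unit_sE _] := mulmx1_unit sE_involutive.
split => //; try by mx_entrywise.
by rewrite -[LHS]mulmx1 -[X in _ *m X]sE_involutive mulmxA mulVmx // mul1mx.
Qed.

Theorem mainTheorem13 :
  [/\ sE \in unitmx, invmx sE = sE,
      sE * sA * sE = sB, sE * sB * sE = sA & sE * sC * sE = sC] /\
  forall (d : nat) (m : nat -> int),
    let t := \tr (W1 d m) in
    let s := antitr (W1 d m) in
    let M := sC * sW d m * sE in
    char_poly M =
      ('X - 1) * (1 - (4 * s) *: 'X - (s ^+ 2 + 4 * t * s + 2) *: 'X ^+ 2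
                  - (4 * s) *: 'X ^+ 3 + 'X ^+ 4)
    /\
    (let sc : algC := s%:~R in
     let tc : algC := t%:~R in
     let D := sqrtC (5 * sc ^+ 2 + 4 * tc * sc + 4) in
     let r1 := sc + D / 2 + sqrtC (9 * sc ^+ 2 + 4 * tc * sc + 4 * sc * D) / 2 in
     let r2 := sc + D / 2 - sqrtC (9 * sc ^+ 2 + 4 * tc * sc + 4 * sc * D) / 2 in
     let r3 := sc - D / 2 + sqrtC (9 * sc ^+ 2 + 4 * tc * sc - 4 * sc * D) / 2 in
     let r4 := sc - D / 2 - sqrtC (9 * sc ^+ 2 + 4 * tc * sc - 4 * sc * D) / 2 in
     char_poly (map_mx intr M : 'M[algC]_5) =
       \prod_(r <- [:: 1; r1; r2; r3; r4]) ('X - r%:P)).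
Proof.
split; first exact: sE_symmetries.
move=> d m t s M.
have charM : char_poly M = ('X - 1) * quartic s t.
  by rewrite /M sW_embed char_poly_sC_embed_sE ?det_W1.
split; first exact: charM.
move=> sc tc D r1 r2 r3 r4.
rewrite -map_char_poly charM -polyC1 rmorphM /= map_polyXsubC map_quartic.
by rewrite big_cons -(@quartic_factor _ sc tc D) ?sqrtCK.
Qed.
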